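(* Let $m>2$ be an odd integer, $n\ge 1$ an integer, and let $M_{2mn}=\langle a,b : a^m=b^{2n}=1,\ bab^{-1}=a^{-1}\rangle$ be the metacyclic group of order $2mn$. Let $\Gamma_{M_{2mn}}$ be its non-commuting graph. Then the spectrum of the distance Laplacian matrix $D^L(\Gamma_{M_{2mn}})$ (eigenvalues counted with multiplicity, multiplicities being added if two of the listed values coincide) consists of: (a) $0$ with multiplicity $1$; (b) $n(2m-1)$ with multiplicity $m$; (c) $2mn$ with multiplicity $m(n-1)$; (d) $(3m-2)n$ with multiplicity $(m-1)n-1$.
   Context: For a finite non-abelian group $G$ with centre $Z(G)$, the non-commuting graph $\Gamma_G$ is the simple undirected graph with vertex set $G\setminus Z(G)$, in which two distinct vertices $u,v$ are adjacent if and only if $uv\ne vu$. For a connected graph $H$, $d_{uv}$ denotes the length of a shortest path between $u$ and $v$; the distance matrix $D(H)$ has $(u,v)$-entry $d_{uv}$. The transmission of a vertex $v$ is $\sum_{u} d_{uv}$, and $Tr(H)$ is the diagonal matrix of vertex transmissions. The distance Laplacian matrix is $D^L(H)=Tr(H)-D(H)$. *)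

From mathcomp Require Import all_boot all_order all_algebra all_fingroup all_solvable.
Set Implicit Arguments.
Unset Strict Implicit.
Unset Printing Implicit Defensive.
Import GRing.Theory.

(* Graphs are given by a vertex set V : {set T} over a finType T and a
   symmetric relation e on T (edges between vertices of V). *)

Definition nc_rel (gT : finGroupType) : rel gT :=
  fun x y => (x * y)%g != (y * x)%g.

Definition nc_vertices (gT : finGroupType) (G : {group gT}) : {set gT} :=
  (G :\: 'Z(G))%g.

Fixpoint ball (T : finType) (V : {set T}) (e : rel T) (u : T) (k : nat)
  : {set T} :=
  match k with
  | 0 => [set u]
  | k'.+1 => ball V e u k' :|: [set y in V | [exists x in ball V e u k', e x y]]
  end.

(* Graph distance: the least k such that v is within distance k of u
   (paths have length < #|T| when they exist; the graphs here are connected). *)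
Definition gdist (T : finType) (V : {set T}) (e : rel T) (u v : T) : nat :=
  find (fun k => v \in ball V e u k) (iota 0 #|T|).

Definition dist_mx (T : finType) (V : {set T}) (e : rel T) : 'M[int]_(#|V|) :=
  \matrix_(i, j) Posz (gdist V e (enum_val i) (enum_val j)).

Definition trans_mx (T : finType) (V : {set T}) (e : rel T) : 'M[int]_(#|V|) :=
  diag_mx (\row_j (\sum_i dist_mx V e i j)%R).

Definition dist_laplacian (T : finType) (V : {set T}) (e : rel T)
  : 'M[int]_(#|V|) := (trans_mx V e - dist_mx V e)%R.

(* The non-commuting graph of M_2mn is complete multipartite.  With c = b^2,
   which is central, every element of G is uniquely a^i b^s c^k (i < m, s < 2,
   k < n), the central ones being the c^k.  Two elements a^i b c^k and a^j b c^l
   commute iff a^i = a^j, while a^i c^k (i <> 0) commutes with a^j b c^l iff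
   a^2i = 1, which is impossible as m is odd.  So the parts are the m sets
   {a^i b c^k | k < n} and the set {a^i c^k | i <> 0} of size (m-1)n.
   In a complete multipartite graph on N vertices, distinct vertices are at
   distance 2 inside a part and 1 across parts, so D^L = diag(N + |P_x|) - J - B,
   with B the block all-ones matrix of the parts.  The all-ones vector, the
   vectors N 1_P - |P| 1 for all parts P but one, and the vectors |P| e_x - 1_P
   for the vertices x of P other than a fixed representative form an eigenbasis,
   with eigenvalues 0, N and N + |P|. *)

From mathcomp Require Import all_boot all_order all_algebra all_fingroup all_solvable.
From mathcomp Require Import zify ring.
Set Implicit Arguments.
Unset Strict Implicit.
Unset Printing Implicit Defensive.
Import GRing.Theory Num.Theory.
Local Open Scope ring_scope.

Lemma char_poly_intertwined (R : idomainType) n (A B Q : 'M[R]_n) :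
  A *m Q = Q *m B -> \det Q != 0 -> char_poly A = char_poly B.
Proof.
move=> AQ detQ.
have QX : char_poly_mx A *m map_mx polyC Q = map_mx polyC Q *m char_poly_mx B.
  by rewrite /char_poly_mx mulmxBl mulmxBr -scalar_mxC -!map_mxM AQ.
have := congr1 determinant QX; rewrite !det_mulmx det_map_mx /= => detQX.
have detQP : (\det Q)%:P != 0 by rewrite polyC_eq0.
by apply: (mulIf detQP); rewrite /char_poly detQX mulrC.
Qed.

Lemma det_neq0_of_mul_diag (R : idomainType) n (P Q : 'M[R]_n) (d : 'rV[R]_n) :
  P *m Q = diag_mx d -> (forall i, d 0 i != 0) -> \det Q != 0.
Proof.
move=> PQ d_neq0; have := congr1 determinant PQ; rewrite det_mulmx det_diag.
have : \prod_i d 0 i != 0 by apply/prodf_neq0 => i _.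
by move=> + detPQ; apply: contraNneq => detQ0; rewrite -detPQ detQ0 mulr0.
Qed.

Lemma sumr_indicator (R : nzSemiRingType) (I : finType) (A : {set I}) (P : pred I) :
  \sum_(i in A) (P i)%:R = #|[set i in A | P i]|%:R :> R.
Proof.
rewrite (eq_bigr (fun i => if P i then 1 else 0)) => [|i _]; last by case: (P i).
rewrite -big_mkcondr sumr_const; congr (_ *+ _).
by apply: eq_card => i; rewrite !inE.
Qed.

Lemma sum_delta (R : nzSemiRingType) (I : finType) (A : {pred I}) (j : I) (F : I -> R) :
  j \in A -> \sum_(i in A) (i == j)%:R * F i = F j.
Proof.
move=> jA; rewrite (bigD1 j) //= eqxx mul1r big1 ?addr0 // => i /andP[_ /negbTE ->].
by rewrite mul0r.
Qed.

Section Distance.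
Variables (T : finType) (V : {set T}) (e : rel T).

Lemma ball1E u v : (v \in ball V e u 1) = (v == u) || (v \in V) && e u v.
Proof.
rewrite /= !inE; congr (_ || (_ && _)).
apply/existsP/idP => [[w /andP[]]|euv]; first by rewrite inE => /eqP ->.
by exists u; rewrite inE eqxx.
Qed.

Lemma gdist_ball_min u v k : (k < #|T|)%N -> v \in ball V e u k ->
  (forall j, (j < k)%N -> v \notin ball V e u j) -> gdist V e u v = k.
Proof.
move=> kT vk vj; rewrite /gdist -(subnKC (ltnW kT)) iotaD find_cat size_iota.
have /negbTE -> : ~~ has (fun j => v \in ball V e u j) (iota 0 k).
  by apply/hasPn => j; rewrite mem_iota => /andP[_]; apply: vj.
have [K ->] : exists K, (#|T| - k)%N = K.+1 by exists (#|T| - k).-1; lia.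
by rewrite /= add0n vk addn0.
Qed.

End Distance.

(* The parts of the graph are the fibres of r, which picks a representative
   in each part. *)
Section CompleteMultipartite.
Variables (T : finType) (V : {set T}) (e : rel T) (r : T -> T).
Hypothesis r_in : {in V, forall x, r x \in V}.
Hypothesis r_idem : {in V, forall x, r (r x) = r x}.
Hypothesis e_parts : {in V &, forall x y, e x y = (r x != r y)}.
Hypothesis other_part : {in V, forall x, exists2 z, z \in V & r z != r x}.

Local Notation N := #|V|.
Local Notation vx := (@enum_val T (mem V)).

Definition part (q : T) : {set T} := [set y in V | r y == q].

Definition reps : {set T} := [set q in V | r q == q].

Definition part_dist (x y : T) : nat :=
  if x == y then 0%N else if r x == r y then 2%N else 1%N.

Lemma gdist_parts x y : x \in V -> y \in V -> gdist V e x y = part_dist x y.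
Proof.
move=> xV yV; rewrite /part_dist.
have [<-|xy] := eqVneq x y.
  apply: gdist_ball_min => //; first by apply/card_gt0P; exists x.
  by rewrite inE.
have y_ball0 : y \notin ball V e x 0 by rewrite inE eq_sym.
have [rxy|rxy] := eqVneq (r x) (r y); last first.
  apply: gdist_ball_min => [|| [|]//].
    by apply/card_gt1P; exists x, y.
  by rewrite ball1E yV e_parts ?rxy ?orbT.
have [z zV rzx] := other_part xV.
apply: gdist_ball_min => [||[|[|j]]] //.
- apply/card_gt2P; exists x, y, z; split=> //; split=> //.
  + by apply: contraNneq rzx => <-; rewrite rxy.
  + by apply: contraNneq rzx => ->.
- rewrite /= !inE yV; apply/orP; right; apply/existsP; exists z.
  by rewrite ball1E zV e_parts // (eq_sym (r x)) rzx orbT e_parts // -rxy.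
- by move=> _; rewrite ball1E e_parts // rxy eqxx eq_sym (negbTE xy) andbF.
Qed.

Lemma mem_part x : x \in V -> x \in part (r x).
Proof. by move=> xV; rewrite inE xV eqxx. Qed.

Lemma part_distZ x y : (part_dist x y)%:Z = 1 + (r x == r y)%:R - 2 * (x == y)%:R.
Proof. by rewrite /part_dist; case: eqVneq => [->|_]; [rewrite eqxx | case: eqP]. Qed.

Lemma transmission_part_dist y : y \in V ->
  \sum_(x in V) (part_dist x y)%:Z = (N + #|part (r y)|)%:R - 2.
Proof.
move=> yV; under eq_bigr do rewrite part_distZ.
rewrite !big_split /= sumr_const sumr_indicator sumrN -mulr_sumr.
under [X in 2 * X]eq_bigr do rewrite -[(_ == y)%:R]mulr1.
by rewrite sum_delta // natrD -[1 *+ N]mulr_natl; ring.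
Qed.

Definition part_laplacian x y : int :=
  (x == y)%:R * (N + #|part (r x)|)%:R - 1 - (r x == r y)%:R.

Lemma dist_laplacian_parts i j :
  dist_laplacian V e i j = part_laplacian (vx i) (vx j).
Proof.
rewrite !mxE; under eq_bigr do rewrite mxE.
rewrite -(big_enum_val (fun x => (gdist V e x (vx i))%:Z)) /=.
under eq_bigr => x xV do rewrite gdist_parts ?enum_valP //.
rewrite transmission_part_dist ?enum_valP // gdist_parts ?enum_valP //.
rewrite part_distZ /part_laplacian (inj_eq enum_val_inj).
by case: eqVneq => [->|_]; rewrite ?eqxx /=; ring.
Qed.

Definition lapv (f : T -> int) x : int := \sum_(y in V) part_laplacian x y * f y.

Lemma eq_lapv f g x : {in V, f =1 g} -> lapv f x = lapv g x.
Proof. by move=> fg; apply: eq_bigr => y yV; rewrite fg. Qed.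

Lemma lapvB a b f g x :
  lapv (fun y => a * f y - b * g y) x = a * lapv f x - b * lapv g x.
Proof. by rewrite /lapv !mulr_sumr -sumrB; apply: eq_bigr => y _; ring. Qed.

Lemma sum_part_indicator q : \sum_(y in V) ((r y == q)%:R : int) = #|part q|%:R.
Proof. exact: sumr_indicator. Qed.

Lemma lapv1 x : x \in V -> lapv (fun=> 1) x = 0.
Proof.
move=> xV; rewrite /lapv /part_laplacian.
under eq_bigr do rewrite mulr1 (eq_sym x) (eq_sym (r x)).
rewrite !sumrB sum_delta // sum_part_indicator sumr_const.
by rewrite -[1 *+ N]mulr_natl natrD; ring.
Qed.

Lemma lapv_part x q : x \in V ->
  lapv (fun y => (r y == q)%:R) x = N%:R * (r x == q)%:R - #|part q|%:R.
Proof.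
move=> xV; rewrite /lapv /part_laplacian.
under eq_bigr do rewrite !mulrBl mul1r (eq_sym x) -mulrA.
rewrite !sumrB sum_delta // sum_part_indicator.
have [<-|rxq] := eqVneq (r x) q.
  under eq_bigr do rewrite (eq_sym (r x)) -natrM mulnb andbb.
  by rewrite sum_part_indicator natrD /= !mulr1n; ring.
rewrite big1 => [|y _]; first by rewrite /= !mulr0n; ring.
by have [->|] := eqVneq (r y) q; rewrite ?(negbTE rxq) ?mul0r ?mulr0.
Qed.

Lemma lapv_delta x z : z \in V -> lapv (fun y => (y == z)%:R) x = part_laplacian x z.
Proof. by move=> zV; rewrite /lapv; under eq_bigr do rewrite mulrC; rewrite sum_delta. Qed.

Section Eigenbasis.
Variable x0 : T.
Hypotheses (x0_in : x0 \in V) (r_x0 : r x0 = x0).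

Definition eigvec z y : int :=
  if z == x0 then 1
  else if r z == z then N%:R * (r y == z)%:R - #|part (r z)|%:R
  else #|part (r z)|%:R * (y == z)%:R - (r y == r z)%:R.

Definition eigval z : int :=
  if z == x0 then 0 else if r z == z then N%:R else (N + #|part (r z)|)%:R.

Lemma lapv_eigvec x z : x \in V -> z \in V ->
  lapv (eigvec z) x = eigval z * eigvec z x.
Proof.
move=> xV zV; rewrite /eigval /eigvec.
have [zx0|zx0] := eqVneq z x0.
  by rewrite mul0r lapv1.
have [rz|rz] := eqVneq (r z) z.
  rewrite (eq_lapv
    (g := fun y => N%:R * (r y == z)%:R - #|part (r z)|%:R * 1)).
    by rewrite lapvB lapv_part // lapv1 // rz; ring.
  by move=> y _; rewrite mulr1.
rewrite (eq_lapv
  (g := fun y => #|part (r z)|%:R * (y == z)%:R - 1 * (r y == r z)%:R)).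
  rewrite lapvB lapv_delta // lapv_part // /part_laplacian.
  have [->|_] := eqVneq x z; rewrite ?eqxx /=; first by ring.
  by have [->|_] := eqVneq (r x) (r z); rewrite /=; ring.
by move=> y _; rewrite mul1r.
Qed.

Lemma sum_part_indicatorM p q :
  \sum_(y in V) ((r y == p)%:R * (r y == q)%:R : int) = (p == q)%:R * #|part q|%:R.
Proof.
have [<-|pq] := eqVneq p q; last first.
  rewrite /= mul0r big1 // => y _.
  by have [->|] := eqVneq (r y) p; rewrite ?(negbTE pq) /= ?mulr0n ?mulr0 ?mul0r.
rewrite /= mulr1n mul1r -sum_part_indicator.
by apply: eq_bigr => y _; rewrite -natrM mulnb andbb.
Qed.

Lemma sum_eigvec z : z \in V -> \sum_(y in V) eigvec z y = (z == x0)%:R * N%:R.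
Proof.
move=> zV; rewrite /eigvec; have [_|zx0] := eqVneq z x0.
  by rewrite sumr_const /= mul1r.
have [rz|rz] := eqVneq (r z) z.
  by rewrite /= sumrB -mulr_sumr sum_part_indicator sumr_const -mulr_natl rz /= mulr0n; ring.
under eq_bigr do rewrite mulrC.
by rewrite /= sumrB sum_delta // sum_part_indicator mulr0n; ring.
Qed.

Lemma sum_part_eigvec q z : q \in V -> r q = q -> z \in V ->
  \sum_(y in V) (r y == q)%:R * eigvec z y =
    if z == x0 then #|part q|%:R
    else if r z == z then #|part (r z)|%:R * (N%:R * (z == q)%:R - #|part q|%:R)
    else 0.
Proof.
move=> qV rq zV; rewrite /eigvec; case: (eqVneq z x0) => [_|zx0] /=.
  by under eq_bigr do rewrite mulr1; rewrite sum_part_indicator.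
case: (eqVneq (r z) z) => [rz|rz] /=.
  under eq_bigr do rewrite mulrBr mulrCA.
  rewrite sumrB -mulr_sumr -mulr_suml sum_part_indicatorM sum_part_indicator rz.
  by rewrite (eq_sym q); ring.
under eq_bigr do rewrite mulrBr mulrCA (mulrC (r _ == q)%:R).
rewrite sumrB -mulr_sumr sum_delta // sum_part_indicatorM.
by have [rzq|_] := eqVneq (r z) q; rewrite ?rzq /=; ring.
Qed.

(* The rows dualvec x invert the columns eigvec z up to the nonzero factors
   eigweight z, which proves that the eigenvectors form a basis. *)
Definition dualvec x y : int :=
  if x == x0 then 1
  else if r x == x then #|part x0|%:R * (r y == x)%:R - #|part x|%:R * (r y == x0)%:R
  else (y == x)%:R - (y == r x)%:R.

Definition eigweight z : int :=
  if z == x0 then N%:R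
  else if r z == z then (N * #|part x0| * #|part z|)%:R else #|part (r z)|%:R.

Lemma dualvec_eigvec x z : x \in V -> z \in V ->
  \sum_(y in V) dualvec x y * eigvec z y = (x == z)%:R * eigweight z.
Proof.
move=> xV zV; rewrite /dualvec /eigweight.
case: (eqVneq x x0) => [->|xx0] /=.
  under eq_bigr do rewrite mul1r.
  by rewrite sum_eigvec // (eq_sym x0); case: eqVneq; rewrite /= ?mul1r ?mul0r.
case: (eqVneq (r x) x) => [rx|rx] /=.
  under eq_bigr do rewrite mulrBl -!mulrA.
  rewrite sumrB -!mulr_sumr !sum_part_eigvec //.
  case: (eqVneq z x0) => [->|zx0] /=; first by rewrite (negbTE xx0) /=; ring.
  case: (eqVneq (r z) z) => [rz|rz] /=; last first.
    have -> : (x == z) = false by apply: contraNF _ rz => /eqP <-; rewrite rx.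
    by rewrite /= mul0r !mulr0 subrr.
  by rewrite rz natrM natrM (eq_sym x); ring.
under eq_bigr do rewrite mulrBl.
rewrite sumrB !sum_delta ?r_in // /eigvec r_idem //.
case: (eqVneq z x0) => [->|zx0] /=; first by rewrite (negbTE xx0) /=; ring.
case: (eqVneq (r z) z) => [rz|rz] /=.
  have -> : (x == z) = false by apply: contraNF _ rx => /eqP ->; rewrite rz.
  by rewrite /=; ring.
have -> : (r x == z) = false by apply: contraNF _ rz => /eqP <-; rewrite r_idem.
by rewrite /=; ring.
Qed.

Lemma part_gt0 x : x \in V -> (0 < #|part (r x)|)%N.
Proof. by move=> xV; apply/card_gt0P; exists x; apply: mem_part. Qed.

Lemma eigweight_neq0 z : z \in V -> eigweight z != 0.
Proof.
move=> zV; have := part_gt0 zV; have := part_gt0 x0_in; rewrite r_x0 => n0 nz.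
have N0 : (0 < N)%N by apply/card_gt0P; exists z.
rewrite /eigweight; case: (z == x0); last case: (eqVneq (r z) z) => [rz|_].
- by rewrite pnatr_eq0 -lt0n.
- by rewrite pnatr_eq0 -lt0n -rz !muln_gt0 N0 n0 nz.
- by rewrite pnatr_eq0 -lt0n.
Qed.

Definition eigmx : 'M[int]_N := \matrix_(i, j) eigvec (vx j) (vx i).
Definition dualmx : 'M[int]_N := \matrix_(i, j) dualvec (vx i) (vx j).

Lemma dist_laplacian_eigmx :
  dist_laplacian V e *m eigmx = eigmx *m diag_mx (\row_j eigval (vx j)).
Proof.
apply/matrixP => i j; rewrite mul_mx_diag !mxE.
under eq_bigr do rewrite dist_laplacian_parts mxE.
rewrite -(big_enum_val (fun y => part_laplacian (vx i) y * eigvec (vx j) y)) /=.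
by rewrite -/(lapv _ _) lapv_eigvec ?enum_valP // mulrC.
Qed.

Lemma dualmx_eigmx : dualmx *m eigmx = diag_mx (\row_j eigweight (vx j)).
Proof.
apply/matrixP => i j; rewrite !mxE; under eq_bigr do rewrite !mxE.
rewrite -(big_enum_val (fun y => dualvec (vx i) y * eigvec (vx j) y)) /=.
rewrite dualvec_eigvec ?enum_valP // (inj_eq enum_val_inj) mulr_natl.
by case: eqVneq => [->|].
Qed.

Lemma char_poly_eigval :
  char_poly (dist_laplacian V e) = \prod_(x in V) ('X - (eigval x)%:P).
Proof.
rewrite (char_poly_intertwined dist_laplacian_eigmx); last first.
  by apply: (det_neq0_of_mul_diag dualmx_eigmx) => i; rewrite mxE eigweight_neq0 ?enum_valP.
rewrite char_poly_trig ?diag_mx_is_trig // (big_enum_val (fun x => 'X - (eigval x)%:P)).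
by apply: eq_bigr => i _; rewrite !mxE eqxx mulr1n.
Qed.

Lemma prod_reps_eigval :
  \prod_(y in V | r y == y) ('X - (eigval y)%:P) = 'X * ('X - N%:R%:P) ^+ #|reps|.-1.
Proof.
have x0R : x0 \in reps by rewrite inE x0_in r_x0 eqxx.
rewrite (eq_bigl (mem reps)) => [|y]; last by rewrite !inE.
rewrite (big_setD1 x0 x0R) /= {1}/eigval eqxx polyC0 subr0; congr (_ * _).
rewrite (eq_bigr (fun _ => 'X - N%:R%:P)) => [|y /[!inE] /and3P[yx0 _ ry]]; last first.
  by rewrite /eigval (negbTE yx0) ry.
by rewrite prodr_const (cardsD1 x0 reps) x0R.
Qed.

Lemma prod_nonreps_eigval :
  \prod_(y in V | r y != y) ('X - (eigval y)%:P) =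
    \prod_(q in reps) ('X - (N + #|part q|)%:R%:P) ^+ #|part q|.-1.
Proof.
rewrite (partition_big r (mem reps)) => [|y /andP[yV _]]; last first.
  by apply/setIdP; rewrite r_in ?r_idem.
apply: eq_bigr => q /[!inE] /andP[qV rq].
rewrite (eq_bigr (fun _ => 'X - (N + #|part q|)%:R%:P)); last first.
  move=> y /andP[/andP[_ ry] /eqP <-]; rewrite /eigval (negbTE ry).
  by have -> : (y == x0) = false by apply: contraNF _ ry => /eqP ->; rewrite r_x0.
have qq : q \in part q by rewrite inE qV rq.
rewrite prodr_const (cardsD1 q (part q)) qq /=.
congr (_ ^+ _); apply: eq_card => y; rewrite unfold_in !inE /=.
case: (eqVneq (r y) q) => [->|]; rewrite ?andbF // eq_sym.
by case: (y \in V); case: (y != q).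
Qed.

End Eigenbasis.

Theorem char_poly_dist_laplacian_multipartite : V != set0 ->
  char_poly (dist_laplacian V e) =
    'X * ('X - N%:R%:P) ^+ #|reps|.-1
       * \prod_(q in reps) ('X - (N + #|part q|)%:R%:P) ^+ #|part q|.-1.
Proof.
case/set0Pn => x xV; have [x0V rx0] := (r_in xV, r_idem xV).
rewrite (char_poly_eigval x0V rx0) (bigID (fun y => r y == y)) /=.
by rewrite prod_reps_eigval ?prod_nonreps_eigval.
Qed.

End CompleteMultipartite.

Lemma imset_sep (aT rT : finType) (f : aT -> rT) (A : {set aT}) (P : pred rT) :
  [set y in f @: A | P y] = f @: [set x in A | P (f x)].
Proof.
apply/setP => y; rewrite inE; apply/andP/imsetP => [[/imsetP[x xA ->] Pfx]|[x]].
  by exists x; rewrite ?inE ?xA.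
by rewrite inE => /andP[xA Pfx] ->; rewrite imset_f.
Qed.

Section Metacyclic.
Variables (gT : finGroupType) (G : {group gT}) (a b : gT) (m n : nat).
Hypotheses (m_odd : odd m) (m_gt2 : (2 < m)%N) (n_gt0 : (1 <= n)%N).
Hypotheses (defG : G :=: <<[set a; b]>>%g) (a_m : (a ^+ m)%g = 1%g).
Hypotheses (b_2n : (b ^+ (2 * n))%g = 1%g) (bab : (b * a * b^-1)%g = (a^-1)%g).
Hypothesis cardG : #|G| = (2 * m * n)%N.

Local Open Scope group_scope.

Lemma a_in : a \in G. Proof. by rewrite defG mem_gen // !inE eqxx. Qed.
Lemma b_in : b \in G. Proof. by rewrite defG mem_gen // !inE eqxx orbT. Qed.

Lemma conj_a_binv : a ^ b^-1 = a^-1.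
Proof. by rewrite conjgE invgK mulgA bab. Qed.

Lemma mul_b_expa i : b * a ^+ i = a ^- i * b.
Proof.
have : (a ^+ i) ^ b^-1 = a ^- i by rewrite conjXg conj_a_binv expVgn.
by rewrite conjgE invgK mulgA => <-; rewrite mulgKV.
Qed.

Lemma b2_center : b ^+ 2 \in 'Z(G).
Proof.
have a_fix : a ^ (b^-1 ^+ 2) = a.
  by rewrite expgS expg1 conjgM conj_a_binv conjVg conj_a_binv invgK.
have a_b2 : commute a (b ^+ 2).
  by rewrite -[b]invgK expVgn; apply: commuteV; rewrite /commute conjgC a_fix.
have sGC : G \subset 'C[b ^+ 2].
  rewrite defG gen_subG; apply/subsetP => y /set2P[] -> ; apply/cent1P => //.
  exact: commuteX 2 (commute_refl b).
apply/centerP; split; first by rewrite groupX ?b_in.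
by move=> y /(subsetP sGC)/cent1P/commute_sym.
Qed.

Local Notation D := ('I_m * 'I_n * bool)%type.

Definition phi (t : D) : gT := a ^+ t.1.1 * b ^+ t.2 * (b ^+ 2) ^+ t.1.2.

Lemma phi_in t : phi t \in G.
Proof. by rewrite !groupM ?groupX ?a_in ?b_in. Qed.

Lemma b_norm_cycle_a : b \in 'N(<[a]>).
Proof. by rewrite -groupV; apply/normP; rewrite -cycleJ conj_a_binv cycleV. Qed.

Lemma sub_imset_phi : G \subset phi @: setT.
Proof.
have sG : G \subset <[a]> * <[b]>.
  rewrite -norm_joinEr ?cycle_subG ?b_norm_cycle_a // defG gen_subG.
  apply/subsetP => y /set2P[] ->; apply: mem_gen; rewrite inE cycle_id ?orbT //.
apply/subsetP => x /(subsetP sG) /mulsgP[y z /cycleP[i ->] /cycleP[j ->] ->].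
have j_lt : (j %% (2 * n) < 2 * n)%N by rewrite ltn_pmod ?muln_gt0.
have k_lt : ((j %% (2 * n))./2 < n)%N.
  by move: j_lt; have := odd_double_half (j %% (2 * n)); rewrite -muln2; lia.
have i_lt : (i %% m < m)%N by rewrite ltn_pmod // ltnW // ltnW.
apply/imsetP; exists ((Ordinal i_lt, Ordinal k_lt), odd (j %% (2 * n))) => //.
rewrite /phi /= expg_mod // -mulgA -expgM -expgD [(2 * _./2)%N]mul2n.
by rewrite odd_double_half expg_mod.
Qed.

Lemma imset_phi : phi @: setT = G.
Proof.
apply/eqP; rewrite eqEsubset sub_imset_phi andbT.
by apply/subsetP => _ /imsetP[t _ ->]; apply: phi_in.
Qed.

Lemma phi_inj : injective phi.
Proof.
have : #|phi @: setT| == #|[set: D]|.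
  by rewrite imset_phi cardG cardsT !card_prod !card_ord card_bool; apply/eqP; lia.
by move/imset_injP => phi_injT t t'; apply: phi_injT; rewrite inE.
Qed.

Definition o0m : 'I_m := Ordinal (ltnW (ltnW m_gt2)).
Definition o1m : 'I_m := Ordinal (ltnW m_gt2).
Definition o0n : 'I_n := Ordinal n_gt0.

Lemma o1m_neq0 : (o1m == o0m) = false. Proof. by []. Qed.

Lemma expa_inj (i j : 'I_m) : (a ^+ i == a ^+ j) = (i == j).
Proof.
have phi_a k : phi ((k, o0n), false) = a ^+ k by rewrite /phi /= !expg0 !mulg1.
by rewrite -!phi_a (inj_eq phi_inj) !xpair_eqE eqxx !andbT.
Qed.

Lemma expa_eq1 (i : 'I_m) : (a ^+ i == 1) = (i == o0m).
Proof. by rewrite -(expg0 a) -[0%N]/(val o0m) expa_inj. Qed.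

Lemma eq_invg_odd (w : gT) : w ^+ m = 1 -> (w == w^-1) = (w == 1).
Proof.
move=> wm; apply/eqP/eqP => [wV|->]; last by rewrite invg1.
have w2 : w ^+ 2 = 1 by rewrite expgS expg1 {1}wV mulVg.
have m1 : m.+1 = (2 * (m.+1)./2)%N.
  by rewrite -[LHS]odd_double_half /= m_odd /= mul2n.
by have := expgS w m; rewrite wm mulg1 m1 expgM w2 expg1n.
Qed.

Lemma commute_expa_expab i j :
  (a ^+ i * (a ^+ j * b) == a ^+ j * b * a ^+ i) = (a ^+ i == 1).
Proof.
rewrite -[a ^+ j * b * a ^+ i]mulgA mul_b_expa !mulgA (inj_eq (mulIg _)).
rewrite (commuteX2 _ _ (commute_refl a)) (inj_eq (mulgI _)).
by rewrite eq_invg_odd // expgAC a_m expg1n.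
Qed.

Lemma commute_expab i j :
  (a ^+ i * b * (a ^+ j * b) == a ^+ j * b * (a ^+ i * b)) = (a ^+ i == a ^+ j).
Proof.
have expab2 k l : a ^+ k * b * (a ^+ l * b) = a ^+ k * a ^- l * (b * b).
  by rewrite -mulgA (mulgA b) mul_b_expa !mulgA.
rewrite !expab2 (inj_eq (mulIg _)) -[a ^+ j * a ^- i]invgK invMg invgK.
rewrite eq_invg_odd -?eq_mulgV1 // expgMn; last by apply: commuteV; apply: commuteX2.
by rewrite expgAC a_m expg1n expgVn expgAC a_m expg1n invg1 mulg1.
Qed.

Lemma eq_commute_center (x y z w : gT) :
    x \in G -> y \in G -> z \in 'Z(G) -> w \in 'Z(G) ->
  (x * z * (y * w) == y * w * (x * z)) = (x * y == y * x).
Proof.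
move=> xG yG /centerP[zG cz] /centerP[_ cw].
have -> : x * z * (y * w) = x * y * (z * w) by rewrite -!mulgA (mulgA z) (cz y yG) -mulgA.
have -> : y * w * (x * z) = y * x * (z * w).
  by rewrite -!mulgA (mulgA w) (cw x xG) -mulgA (cw z zG).
by rewrite (inj_eq (mulIg _)).
Qed.

Definition comm_params (t t' : D) : bool :=
  if t.2 && t'.2 then t.1.1 == t'.1.1
  else (t.2 ==> (t'.1.1 == o0m)) && (t'.2 ==> (t.1.1 == o0m)).

Lemma phi_commute t t' : (phi t * phi t' == phi t' * phi t) = comm_params t t'.
Proof.
have c_center k : (b ^+ 2) ^+ k \in 'Z(G) := groupX k b2_center.
rewrite /phi /comm_params eq_commute_center ?c_center ?groupM ?groupX ?a_in ?b_in //.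
case: t => [[i k] []]; case: t' => [[j l] []] /=; rewrite ?expg1 ?expg0 ?mulg1.
- by rewrite commute_expab expa_inj.
- by rewrite eq_sym commute_expa_expab expa_eq1 andbT.
- by rewrite commute_expa_expab expa_eq1.
- by rewrite (commuteX2 _ _ (commute_refl a)) eqxx.
Qed.

Definition center_params : {set D} := setX (setX [set o0m] setT) [set false].

Lemma in_center_params t : (t \in center_params) = (t.1.1 == o0m) && ~~ t.2.
Proof. by case: t => [[i k] s]; rewrite !in_setX !in_set1 in_setT andbT eqbF_neg. Qed.

Lemma phi_center t : (phi t \in 'Z(G)) = (t \in center_params).
Proof.
rewrite in_center_params; case: t => [[i k] s] /=.
apply/centerP/idP => [[_ cz]|iZ].
  have /eqP := cz _ (phi_in ((o1m, o0n), false)).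
  have /eqP := cz _ (phi_in ((o0m, o0n), true)).
  by rewrite !phi_commute /comm_params /= o1m_neq0; clear cz; case: s; rewrite ?andbT.
split=> [|y]; first exact: phi_in.
rewrite -imset_phi => /imsetP[t' _ ->]; apply/eqP; rewrite phi_commute.
by case/andP: iZ => /eqP -> /negbTE ->; rewrite /comm_params /= eqxx; case: t'.2.
Qed.

Lemma phi_vertex t : (phi t \in nc_vertices G) = (t \notin center_params).
Proof. by rewrite /nc_vertices in_setD phi_center phi_in andbT. Qed.

Lemma nc_vertices_phi : nc_vertices G = phi @: ~: center_params.
Proof.
apply/setP => x; apply/idP/imsetP => [xV|[t tZ ->]]; last by rewrite phi_vertex -in_setC.
have /setDP[+ _] := xV; rewrite -imset_phi => /imsetP[t _ xt].
by exists t; rewrite // in_setC -phi_vertex -xt.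
Qed.

(* rep maps a^i b c^k to a^i b and a^i c^k to a, so its fibres are the parts
   of the non-commuting graph. *)
Definition param_a : D := ((o1m, o0n), false).
Definition rep_param (t : D) : D := if t.2 then ((t.1.1, o0n), true) else param_a.
Definition param (x : gT) : D := odflt param_a [pick t | phi t == x].
Definition rep (x : gT) : gT := phi (rep_param (param x)).

Lemma phiK : cancel phi param.
Proof.
by move=> t; rewrite /param; case: pickP => [t' /eqP/phi_inj //|/(_ t)]; rewrite eqxx.
Qed.

Lemma rep_phi t : rep (phi t) = phi (rep_param t).
Proof. by rewrite /rep phiK. Qed.

Lemma rep_param_notin_center t : rep_param t \notin center_params.
Proof.
by rewrite in_center_params /rep_param /param_a; case: t.2; rewrite /= ?andbF ?o1m_neq0.
Qed.

Lemma comm_params_rep t t' : t \notin center_params -> t' \notin center_params ->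
  comm_params t t' = (rep_param t == rep_param t').
Proof.
case: t t' => [[i k] s] [[j l] u]; rewrite !in_center_params /comm_params /rep_param /=.
case: s; case: u; rewrite /= ?xpair_eqE ?eqxx ?eqbF_neg ?eqb_id ?andbT ?andbF //.
  by move=> _ /negbTE.
by move=> /negbTE.
Qed.

Lemma rep_vertex : {in nc_vertices G, forall x, rep x \in nc_vertices G}.
Proof.
rewrite nc_vertices_phi => _ /imsetP[t _ ->].
by rewrite rep_phi imset_f // in_setC rep_param_notin_center.
Qed.

Lemma rep_idem : {in nc_vertices G, forall x, rep (rep x) = rep x}.
Proof.
by rewrite nc_vertices_phi => _ /imsetP[t _ ->]; rewrite !rep_phi /rep_param; case: t.2.
Qed.

Lemma nc_rel_rep : {in nc_vertices G &, forall x y, nc_rel x y = (rep x != rep y)}.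
Proof.
rewrite nc_vertices_phi => _ _ /imsetP[t tZ ->] /imsetP[t' t'Z ->].
by rewrite /nc_rel phi_commute !rep_phi (inj_eq phi_inj) comm_params_rep -?in_setC.
Qed.

Lemma rep_other_part :
  {in nc_vertices G, forall x, exists2 z, z \in nc_vertices G & rep z != rep x}.
Proof.
rewrite nc_vertices_phi => _ /imsetP[t _ ->].
exists (phi (if t.2 then param_a else ((o0m, o0n), true))).
  by apply: imset_f; rewrite in_setC in_center_params; case: t.2.
rewrite !rep_phi (inj_eq phi_inj) /rep_param /param_a.
by case: t.2 => //=; apply/eqP; case.
Qed.

Lemma nc_vertices_neq0 : nc_vertices G != set0.
Proof.
apply/set0Pn; exists (phi param_a).
by rewrite nc_vertices_phi imset_f // in_setC in_center_params o1m_neq0.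
Qed.

Lemma card_nc_vertices : #|nc_vertices G| = (n * (2 * m - 1))%N.
Proof.
rewrite nc_vertices_phi card_imset; last exact: phi_inj.
have := cardsC center_params; rewrite !cardsX !cards1 !cardsT !card_prod !card_ord card_bool.
by move: #|~: center_params| => k; nia.
Qed.

Definition rep_params : {set D} := param_a |: setX (setX setT [set o0n]) [set true].

Lemma reps_phi : reps (nc_vertices G) rep = phi @: rep_params.
Proof.
rewrite /reps nc_vertices_phi imset_sep /=.
rewrite (_ : [set t in ~: center_params | rep (phi t) == phi t] = rep_params) //.
apply/setP => -[[i k] s]; rewrite !inE rep_phi (inj_eq phi_inj) /rep_param /param_a.
case: s; rewrite /= !xpair_eqE ?eqxx ?eqbF_neg ?eqb_id ?andbT ?andbF ?orbF //=.
by rewrite (eq_sym o1m) (eq_sym o0n); case: (eqVneq i o1m) => [->|_]; rewrite ?o1m_neq0 ?andbF.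
Qed.

Lemma card_reps : #|reps (nc_vertices G) rep| = m.+1.
Proof.
rewrite reps_phi card_imset; last exact: phi_inj.
by rewrite cardsU1 !cardsX cardsT !cards1 card_ord !muln1 !in_setX !in_set1 andbF.
Qed.

Lemma part_phi q :
  part (nc_vertices G) rep (phi q) = phi @: [set t in ~: center_params | rep_param t == q].
Proof.
rewrite /part nc_vertices_phi imset_sep /=.
by under eq_finset do rewrite rep_phi (inj_eq phi_inj).
Qed.

Lemma card_part_a : #|part (nc_vertices G) rep (phi param_a)| = ((m - 1) * n)%N.
Proof.
rewrite part_phi card_imset; last exact: phi_inj.
rewrite (_ : [set t in ~: center_params | rep_param t == param_a] =
             setX (setX [set~ o0m] setT) [set false]).
  by rewrite !cardsX cardsC1 cardsT !card_ord cards1 muln1 subn1.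
apply/setP => -[[i k] s]; rewrite !inE /rep_param /param_a.
by case: s; rewrite /= !xpair_eqE ?eqxx ?eqbF_neg ?eqb_id ?andbT ?andbF.
Qed.

Lemma card_part_b (i : 'I_m) : #|part (nc_vertices G) rep (phi ((i, o0n), true))| = n.
Proof.
rewrite part_phi card_imset; last exact: phi_inj.
rewrite (_ : [set t in ~: center_params | rep_param t == ((i, o0n), true)] =
             setX (setX [set i] setT) [set true]).
  by rewrite !cardsX cardsT card_ord !cards1 mul1n muln1.
apply/setP => -[[j k] s]; rewrite !inE /rep_param /param_a.
by case: s; rewrite /= !xpair_eqE ?eqxx ?eqbF_neg ?eqb_id ?andbT ?andbF.
Qed.

Local Close Scope group_scope.

Lemma prod_reps_card_part (R : comNzRingType) (F : nat -> R) :
  \prod_(q in reps (nc_vertices G) rep) F #|part (nc_vertices G) rep q| =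
    F ((m - 1) * n)%N * F n ^+ m.
Proof.
rewrite reps_phi big_imset /=; last by move=> t t' _ _; apply: phi_inj.
rewrite big_setU1 /= ?card_part_a; last by rewrite !in_setX !in_set1 andbF.
rewrite (eq_bigr (fun _ => F n)) => [|[[i k] s]]; last first.
  by rewrite !in_setX !in_set1 => /andP[/andP[_ /eqP ->] /eqP ->]; rewrite card_part_b.
by rewrite prodr_const !cardsX cardsT card_ord !cards1 !muln1.
Qed.

Lemma char_poly_nc_dist_laplacian :
  char_poly (dist_laplacian (nc_vertices G) (@nc_rel gT)) =
    'X * ('X - #|nc_vertices G|%:R%:P) ^+ m
       * ('X - (#|nc_vertices G| + (m - 1) * n)%:R%:P) ^+ ((m - 1) * n).-1
       * ('X - (#|nc_vertices G| + n)%:R%:P) ^+ (m * n.-1).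
Proof.
rewrite (char_poly_dist_laplacian_multipartite rep_vertex rep_idem nc_rel_rep rep_other_part
  nc_vertices_neq0).
rewrite card_reps (prod_reps_card_part (fun k => ('X - (#|nc_vertices G| + k)%:R%:P) ^+ k.-1)).
by rewrite mulrA -exprM (mulnC n.-1).
Qed.

End Metacyclic.

Theorem theorem6p3 (gT : finGroupType) (G : {group gT}) (a b : gT)
  (m n : nat) (hm_odd : odd m) (hm : (2 < m)%N) (hn : (1 <= n)%N)
  (hG : G :=: <<[set a; b]>>%g)
  (ha : (a ^+ m)%g = 1%g) (hb : (b ^+ (2 * n))%g = 1%g)
  (hab : (b * a * b^-1)%g = (a^-1)%g)
  (hord : #|G| = (2 * m * n)%N) :
  char_poly (dist_laplacian (nc_vertices G) (@nc_rel gT)) =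
    'X
    * ('X - ((n * (2 * m - 1))%N)%:R%:P) ^+ m
    * ('X - ((2 * m * n)%N)%:R%:P) ^+ (m * (n - 1))
    * ('X - (((3 * m - 2) * n)%N)%:R%:P) ^+ ((m - 1) * n - 1).
Proof.
rewrite (char_poly_nc_dist_laplacian hm_odd hm hn hG ha hb hab hord).
rewrite (card_nc_vertices hm_odd hm hn hG ha hb hab hord).
have -> : (n * (2 * m - 1) + (m - 1) * n = (3 * m - 2) * n)%N by nia.
have -> : (n * (2 * m - 1) + n = 2 * m * n)%N by nia.
by rewrite -!subn1 -!mulrA [X in _ * (_ * X)]mulrC.
Qed.
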